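(* $\mathsf{BA}^\mathsf{S}$ is an allegory, and the functors $\mathsf{Clop}$ and $\mathsf{Ult}$ yield an equivalence of allegories between $\mathsf{Stone}^{\mathsf{R}}$ and $\mathsf{BA}^\mathsf{S}$. In particular, for closed relations $R_1,R_2\colon X\to Y$ between Stone spaces, $R_1\subseteq R_2$ iff $S_{R_2}\subseteq S_{R_1}$; for subordinations $S_1,S_2\colon A\to B$, $S_1\subseteq S_2$ iff $R_{S_2}\subseteq R_{S_1}$; and $S_{\breve R}=(S_R)^\dagger$, $R_{S^\dagger}=\breve{(R_S)}$.
   Context: An order-enriched category is a category whose hom-sets are partially ordered such that $f\le f'$ and $g\le g'$ imply $gf\le g'f'$. A dagger on a category is a contravariant endofunctor $(-)^\dagger$ which is the identity on objects and satisfies $f^{\dagger\dagger}=f$. An allegory is an order-enriched category with a dagger such that each hom-set has binary meets, $f\le g$ implies $f^\dagger\le g^\dagger$, and the modular law $gf\wedge h\le(g\wedge hf^\dagger)f$ holds for all $f\colon C\to D$, $g\colon D\to E$, $h\colon C\to E$. A morphism of allegories is a functor preserving binary meets of morphisms and commuting with the daggers; an equivalence of allegories is a morphism of allegories that is an equivalence of categories. $\mathsf{Stone}^{\mathsf{R}}$: objects Stone spaces (zero-dimensional compact Hausdorff spaces), morphisms closed relations $R\subseteq X\times Y$, identities identity relations, composition relational composition, hom-sets ordered by inclusion, dagger the converse relation $\breve R$ ($y\mathrel{\breve R}x$ iff $x\mathrel{R}y$). A subordination $S\colon A\to B$ between boolean algebras is a relation satisfying: (S1) $0\mathrel{S}0$,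 $1\mathrel{S}1$; (S2) $a,b\mathrel{S}c\Rightarrow(a\vee b)\mathrel{S}c$; (S3) $a\mathrel{S}c,d\Rightarrow a\mathrel{S}(c\wedge d)$; (S4) $a\le b\mathrel{S}c\le d\Rightarrow a\mathrel{S}d$. $\mathsf{BA}^\mathsf{S}$: boolean algebras and subordinations, identity $\le$, relational composition, hom-sets ordered by reverse inclusion, and dagger $S^\dagger\colon B\to A$ defined by $b\mathrel{S^\dagger}a$ iff $\neg a\mathrel{S}\neg b$. $\mathsf{Clop}$ sends a Stone space $X$ to the boolean algebra of clopens and a closed relation $R$ to $S_R$ with $U\mathrel{S_R}V\iff R[U]\subseteq V$; $\mathsf{Ult}$ sends a boolean algebra $A$ to its Stone space of ultrafilters and a subordination $S$ to $R_S$ with $x\mathrel{R_S}y\iff S[x]\subseteq y$. *)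

From HB Require Import structures.
From mathcomp Require Import all_boot all_order.
From mathcomp Require Import boolp classical_sets functions topology.
Set Implicit Arguments.
Unset Strict Implicit.
Unset Printing Implicit Defensive.
Import Order.TTheory.
Local Open Scope classical_set_scope.
Local Open Scope order_scope.

(** * Stone spaces and closed relations (the category Stone^R)        *)

Definition stone_space (X : topologicalType) : Prop :=
  [/\ compact [set: X], hausdorff_space X & zero_dimensional X].

(** Relations X -> Y are subsets of X * Y (product topology). *)
Definition rel_id (X : Type) : set (X * X) := [set p | p.1 = p.2].
Arguments rel_id : clear implicits.
Definition rel_comp (X Y Z : Type) (R : set (X * Y)) (R' : set (Y * Z))
  : set (X * Z) := [set p | exists y, R (p.1, y) /\ R' (y, p.2)].
Definition rel_conv (X Y : Type) (R : set (X * Y)) : set (Y * X) :=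
  [set p | R (p.2, p.1)].
Definition rel_image (X Y : Type) (R : set (X * Y)) (U : set X) : set Y :=
  [set y | exists2 x, U x & R (x, y)].

(** * Boolean algebras and subordinations (the category BA^S)          *)
(* Boolean algebras are MathComp's complemented distributive lattices
   with top and bottom, [ctbDistrLatticeType d]. *)

Section Subordinations.
Context {d1 d2 d3 : Order.disp_t}.

Definition subordination {A : ctbDistrLatticeType d1}
    {B : ctbDistrLatticeType d2} (S : A -> B -> Prop) : Prop :=
  [/\ S \bot \bot /\ S \top \top,
      (forall a b c, S a c -> S b c -> S (a `|` b) c),
      (forall a c e, S a c -> S a e -> S a (c `&` e)) &
      (forall a b c e, a <= b -> S b c -> c <= e -> S a e)].

Definition sub_id (A : ctbDistrLatticeType d1) : A -> A -> Prop :=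
  fun a b => a <= b.

Definition sub_comp {A : ctbDistrLatticeType d1} {B : ctbDistrLatticeType d2}
    {C : ctbDistrLatticeType d3} (S : A -> B -> Prop) (T : B -> C -> Prop)
  : A -> C -> Prop := fun a c => exists b, S a b /\ T b c.

Definition sub_dagger {A : ctbDistrLatticeType d1}
    {B : ctbDistrLatticeType d2} (S : A -> B -> Prop) : B -> A -> Prop :=
  fun b a => S (~` a) (~` b).

(** hom-sets ordered by REVERSE inclusion: S <= S' iff S' is included in S *)
Definition sub_le {A : ctbDistrLatticeType d1} {B : ctbDistrLatticeType d2}
    (S S' : A -> B -> Prop) : Prop := forall a b, S' a b -> S a b.

Definition sub_is_meet {A : ctbDistrLatticeType d1}
    {B : ctbDistrLatticeType d2} (S1 S2 M : A -> B -> Prop) : Prop :=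
  [/\ subordination M, sub_le M S1, sub_le M S2 &
      forall N, subordination N -> sub_le N S1 -> sub_le N S2 -> sub_le N M].

End Subordinations.

Fact clop_display : Order.disp_t. Proof. exact: Order.Disp tt tt. Qed.

Definition clop (X : topologicalType) : Type := set_type (@clopen X).

Section ClopLattice.
Variable X : topologicalType.
Local Notation C := (clop X).

HB.instance Definition _ := Choice.on C.

Definition clop_meet (U V : C) : C :=
  SigSub (mem_set (clopenI (set_valP U) (set_valP V))).
Definition clop_join (U V : C) : C :=
  SigSub (mem_set (clopenU (set_valP U) (set_valP V))).
Definition clop_bot : C := SigSub (mem_set (@clopen0 X)).
Definition clop_top : C := SigSub (mem_set (@clopenT X)).
Definition clop_compl (U : C) : C :=
  SigSub (mem_set (@clopenC X (val U) set0 (set_valP U))).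
Definition clop_le (U V : C) : bool := clop_meet U V == U.
Definition clop_lt (U V : C) : bool := (V != U) && clop_le U V.

Let clop_eq (U V : C) : val U = val V -> U = V.
Proof. exact: val_inj. Qed.

Fact clop_le_def (U V : C) : clop_le U V = (clop_meet U V == U).
Proof. by []. Qed.
Fact clop_lt_def (U V : C) : clop_lt U V = (V != U) && clop_le U V.
Proof. by []. Qed.
Fact clop_meetC : commutative clop_meet.
Proof. by move=> U V; apply: clop_eq; rewrite /= setIC. Qed.
Fact clop_joinC : commutative clop_join.
Proof. by move=> U V; apply: clop_eq; rewrite /= setUC. Qed.
Fact clop_meetA : associative clop_meet.
Proof. by move=> U V W; apply: clop_eq; rewrite /= setIA. Qed.
Fact clop_joinA : associative clop_join.
Proof. by move=> U V W; apply: clop_eq; rewrite /= setUA. Qed.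
Fact clop_joinKI (V U : C) : clop_meet U (clop_join U V) = U.
Proof. by apply: clop_eq; rewrite /= setUC setKU. Qed.
Fact clop_meetKU (V U : C) : clop_join U (clop_meet U V) = U.
Proof. by apply: clop_eq; rewrite /= setIC setKI. Qed.
Fact clop_meetUl : left_distributive clop_meet clop_join.
Proof. by move=> U V W; apply: clop_eq; rewrite /= setIUl. Qed.
Fact clop_meetxx : idempotent_op clop_meet.
Proof. by move=> U; apply: clop_eq; rewrite /= setIid. Qed.

HB.instance Definition _ := Order.isMeetJoinDistrLattice.Build clop_display C
  clop_le_def clop_lt_def clop_meetC clop_joinC clop_meetA clop_joinA
  clop_joinKI clop_meetKU clop_meetUl clop_meetxx.

Fact clop_le0x (U : C) : clop_bot <= U.
Proof. by apply/eqP/clop_eq; rewrite /= set0I. Qed.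
Fact clop_lex1 (U : C) : U <= clop_top.
Proof. by apply/eqP/clop_eq; rewrite /= setIT. Qed.

HB.instance Definition _ := Order.hasBottom.Build clop_display C clop_le0x.
HB.instance Definition _ := Order.hasTop.Build clop_display C clop_lex1.

Fact clop_joinxC (U : C) : U `|` clop_compl U = \top.
Proof. by apply: clop_eq; rewrite /= setUv. Qed.
Fact clop_meetxC (U : C) : U `&` clop_compl U = \bot.
Proof. by apply: clop_eq; rewrite /= setICr. Qed.

HB.instance Definition _ :=
  Order.TBDistrLattice_hasComplement.Build clop_display C clop_joinxC clop_meetxC.

End ClopLattice.

Definition Clop (X : topologicalType) : ctbDistrLatticeType clop_display :=
  clop X.

Definition S_of (X Y : topologicalType) (R : set (X * Y))
  : Clop X -> Clop Y -> Prop :=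
  fun U V => rel_image R (val U) `<=` val V.

Section Ultrafilters.
Context {d : Order.disp_t} (A : ctbDistrLatticeType d).

Definition ba_filter (F : set A) : Prop :=
  [/\ F \top, (forall a b, F a -> a <= b -> F b) &
      (forall a b, F a -> F b -> F (a `&` b))].

Definition ba_ultrafilter (F : set A) : Prop :=
  [/\ ba_filter F, ~ F \bot &
      forall G, ba_filter G -> ~ G \bot -> F `<=` G -> G = F].

(** Points of Ult A are the characteristic functions of ultrafilters,
    viewed inside the product space 2^A = {ptws A -> bool}; the
    topology is the subspace topology, i.e. the Stone topology
    generated by the sets {x | a \in x}. *)
Definition ult_points : set {ptws A -> bool} :=
  [set f | ba_ultrafilter [set a | f a]].

End Ultrafilters.

Definition ult (d : Order.disp_t) (A : ctbDistrLatticeType d) : Type :=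
  set_type (@ult_points d A).
HB.instance Definition _ (d : Order.disp_t) (A : ctbDistrLatticeType d) :=
  Topological.on (@ult d A).

Definition Ult (d : Order.disp_t) (A : ctbDistrLatticeType d)
  : topologicalType := @ult d A.

Definition uf {d : Order.disp_t} {A : ctbDistrLatticeType d} (x : Ult A)
  : set A := [set a | val x a].

Definition sub_image {d1 d2 : Order.disp_t} {A : ctbDistrLatticeType d1}
    {B : ctbDistrLatticeType d2} (S : A -> B -> Prop) (F : set A) : set B :=
  [set b | exists2 a, F a & S a b].

Definition R_of {d1 d2 : Order.disp_t} {A : ctbDistrLatticeType d1}
    {B : ctbDistrLatticeType d2} (S : A -> B -> Prop)
  : set (Ult A * Ult B) :=
  [set p | sub_image S (uf p.1) `<=` uf p.2].
Arguments sub_id {d1} A _ _.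


Definition BAS_is_allegory : Prop :=
  (forall d (A : ctbDistrLatticeType d), subordination (sub_id A)) /\
  (forall d1 d2 d3 (A : ctbDistrLatticeType d1) (B : ctbDistrLatticeType d2)
     (C : ctbDistrLatticeType d3) (S : A -> B -> Prop) (T : B -> C -> Prop),
     subordination S -> subordination T -> subordination (sub_comp S T)) /\
  (forall d1 d2 (A : ctbDistrLatticeType d1) (B : ctbDistrLatticeType d2)
     (S : A -> B -> Prop), subordination S ->
     sub_comp (sub_id A) S = S /\ sub_comp S (sub_id B) = S) /\
  (forall d1 d2 d3 d4 (A : ctbDistrLatticeType d1) (B : ctbDistrLatticeType d2)
     (C : ctbDistrLatticeType d3) (D : ctbDistrLatticeType d4)
     (S : A -> B -> Prop) (T : B -> C -> Prop) (U : C -> D -> Prop),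
     subordination S -> subordination T -> subordination U ->
     sub_comp (sub_comp S T) U = sub_comp S (sub_comp T U)) /\
  (forall d1 d2 (A : ctbDistrLatticeType d1) (B : ctbDistrLatticeType d2)
     (S S' S'' : A -> B -> Prop),
     subordination S -> subordination S' -> subordination S'' ->
     [/\ sub_le S S, (sub_le S S' -> sub_le S' S'' -> sub_le S S'') &
         (sub_le S S' -> sub_le S' S -> S = S')]) /\
  (forall d1 d2 d3 (A : ctbDistrLatticeType d1) (B : ctbDistrLatticeType d2)
     (C : ctbDistrLatticeType d3) (S S' : A -> B -> Prop)
     (T T' : B -> C -> Prop),
     subordination S -> subordination S' ->
     subordination T -> subordination T' ->
     sub_le S S' -> sub_le T T' -> sub_le (sub_comp S T) (sub_comp S' T')) /\
  (forall d1 d2 (A : ctbDistrLatticeType d1) (B : ctbDistrLatticeType d2)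
     (S : A -> B -> Prop), subordination S -> subordination (sub_dagger S)) /\
  (forall d (A : ctbDistrLatticeType d), sub_dagger (sub_id A) = sub_id A) /\
  (forall d1 d2 d3 (A : ctbDistrLatticeType d1) (B : ctbDistrLatticeType d2)
     (C : ctbDistrLatticeType d3) (S : A -> B -> Prop) (T : B -> C -> Prop),
     subordination S -> subordination T ->
     sub_dagger (sub_comp S T) = sub_comp (sub_dagger T) (sub_dagger S)) /\
  (forall d1 d2 (A : ctbDistrLatticeType d1) (B : ctbDistrLatticeType d2)
     (S : A -> B -> Prop), subordination S -> sub_dagger (sub_dagger S) = S) /\
  (forall d1 d2 (A : ctbDistrLatticeType d1) (B : ctbDistrLatticeType d2)
     (S S' : A -> B -> Prop), subordination S -> subordination S' ->
     sub_le S S' -> sub_le (sub_dagger S) (sub_dagger S')) /\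
  (forall d1 d2 (A : ctbDistrLatticeType d1) (B : ctbDistrLatticeType d2)
     (S1 S2 : A -> B -> Prop), subordination S1 -> subordination S2 ->
     exists M, sub_is_meet S1 S2 M) /\
  (* modular law:  g f /\ h <= (g /\ h f^dagger) f
     for f : C -> D, g : D -> E, h : C -> E *)
  (forall d1 d2 d3 (C : ctbDistrLatticeType d1) (D : ctbDistrLatticeType d2)
     (E : ctbDistrLatticeType d3) (f : C -> D -> Prop) (g : D -> E -> Prop)
     (h : C -> E -> Prop) (M1 : C -> E -> Prop) (M2 : D -> E -> Prop),
     subordination f -> subordination g -> subordination h ->
     sub_is_meet (sub_comp f g) h M1 ->
     sub_is_meet g (sub_comp (sub_dagger f) h) M2 ->
     sub_le M1 (sub_comp f M2)).

(** Clop : Stone^R -> BA^S is a morphism of allegories (a functor that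
    preserves binary meets -- intersections in Stone^R -- and daggers). *)
Definition Clop_is_allegory_morphism : Prop :=
  (forall (X Y : topologicalType) (R : set (X * Y)),
     stone_space X -> stone_space Y -> closed R -> subordination (S_of R)) /\
  (forall X : topologicalType, stone_space X ->
     S_of (rel_id X) = sub_id (Clop X)) /\
  (forall (X Y Z : topologicalType) (R : set (X * Y)) (R' : set (Y * Z)),
     stone_space X -> stone_space Y -> stone_space Z ->
     closed R -> closed R' ->
     S_of (rel_comp R R') = sub_comp (S_of R) (S_of R')) /\
  (forall (X Y : topologicalType) (R1 R2 : set (X * Y)),
     stone_space X -> stone_space Y -> closed R1 -> closed R2 ->
     sub_is_meet (S_of R1) (S_of R2) (S_of (R1 `&` R2)%classic)) /\
  (forall (X Y : topologicalType) (R : set (X * Y)),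
     stone_space X -> stone_space Y -> closed R ->
     S_of (rel_conv R) = sub_dagger (S_of R)).

Definition Ult_is_allegory_morphism : Prop :=
  (forall d (A : ctbDistrLatticeType d), stone_space (Ult A)) /\
  (forall d1 d2 (A : ctbDistrLatticeType d1) (B : ctbDistrLatticeType d2)
     (S : A -> B -> Prop), subordination S -> closed (R_of S)) /\
  (forall d (A : ctbDistrLatticeType d), R_of (sub_id A) = rel_id (Ult A)) /\
  (forall d1 d2 d3 (A : ctbDistrLatticeType d1) (B : ctbDistrLatticeType d2)
     (C : ctbDistrLatticeType d3) (S : A -> B -> Prop) (T : B -> C -> Prop),
     subordination S -> subordination T ->
     R_of (sub_comp S T) = rel_comp (R_of S) (R_of T)) /\
  (forall d1 d2 (A : ctbDistrLatticeType d1) (B : ctbDistrLatticeType d2)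
     (S1 S2 M : A -> B -> Prop), subordination S1 -> subordination S2 ->
     sub_is_meet S1 S2 M -> R_of M = (R_of S1 `&` R_of S2)%classic) /\
  (forall d1 d2 (A : ctbDistrLatticeType d1) (B : ctbDistrLatticeType d2)
     (S : A -> B -> Prop), subordination S ->
     R_of (sub_dagger S) = rel_conv (R_of S)).

Definition stone_iso (X Y : topologicalType) (R : set (X * Y)) : Prop :=
  closed R /\ exists R' : set (Y * X),
    [/\ closed R', rel_comp R R' = rel_id X & rel_comp R' R = rel_id Y].

Definition sub_iso {d1 d2 : Order.disp_t} {A : ctbDistrLatticeType d1}
    {B : ctbDistrLatticeType d2} (S : A -> B -> Prop) : Prop :=
  subordination S /\ exists S' : B -> A -> Prop,
    [/\ subordination S', sub_comp S S' = sub_id A & sub_comp S' S = sub_id B].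

(** Clop and Ult are quasi-inverse: there are natural isomorphisms
    Id ~= Ult o Clop (on Stone^R) and Clop o Ult ~= Id (on BA^S). *)
Definition Clop_Ult_quasi_inverse : Prop :=
  (exists eta : forall X : topologicalType, set (X * Ult (Clop X)),
     (forall X : topologicalType, stone_space X -> stone_iso (eta X)) /\
     (forall (X Y : topologicalType) (R : set (X * Y)),
        stone_space X -> stone_space Y -> closed R ->
        rel_comp (eta X) (R_of (S_of R)) = rel_comp R (eta Y))) /\
  (exists eps : forall d (A : ctbDistrLatticeType d), Clop (Ult A) -> A -> Prop,
     (forall d (A : ctbDistrLatticeType d), sub_iso (eps d A)) /\
     (forall d1 d2 (A : ctbDistrLatticeType d1) (B : ctbDistrLatticeType d2)
        (S : A -> B -> Prop), subordination S ->
        sub_comp (eps d1 A) S = sub_comp (S_of (R_of S)) (eps d2 B))).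

(* Two separation facts drive the proof.  Algebraically, the prime filter
   theorem (via Zorn) separates a filter from a disjoint ideal by an
   ultrafilter; hence a subordination S is recovered from the closed relation
   R_S between ultrafilters ([subordP]), and the allegory laws of BA^S, as well
   as their preservation by Ult, reduce to the same laws for relations.
   Topologically, clopens separate the points of a Stone space and, by
   compactness, a closed relation is the complement of the clopen boxes it
   misses; so sending x to the ultrafilter of its clopen neighbourhoods is a
   bijection X ~ Ult (Clop X) along which R_{S_R} corresponds to R.  With the
   Stone representation a |-> ult_set a of A onto Clop (Ult A), this makes
   Clop and Ult quasi-inverse. *)

From HB Require Import structures.
From mathcomp Require Import all_boot all_order.
From mathcomp Require Import boolp classical_sets functions topology.
Set Implicit Arguments.
Unset Strict Implicit.
Unset Printing Implicit Defensive.
Import Order.TTheory Order.Theory.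
Local Open Scope classical_set_scope.
Local Open Scope order_scope.

Lemma rel_ext (X Y : Type) (P Q : X -> Y -> Prop) :
  (forall a b, P a b <-> Q a b) -> P = Q.
Proof. by move=> h; apply: funext => a; apply: funext => b; apply: propext. Qed.

Section BooleanFilters.
Context {d : Order.disp_t} {A : ctbDistrLatticeType d}.
Implicit Types (F G J M : set A) (a b c : A).

Definition ba_ideal J : Prop :=
  [/\ J \bot, (forall a b, J b -> a <= b -> J a) &
      (forall a b, J a -> J b -> J (a `|` b))].

Lemma ba_filter_top F : ba_filter F -> F \top.
Proof. by case. Qed.

Lemma ba_filterS F a b : ba_filter F -> F a -> a <= b -> F b.
Proof. by case=> _ h _; exact: h. Qed.

Lemma ba_filterI F a b : ba_filter F -> F a -> F b -> F (a `&` b).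
Proof. by case=> _ _ h; exact: h. Qed.

Lemma ba_filter_up a : ba_filter [set c | a <= c].
Proof.
split=> [|b c /= ab bc|b c /= ab ac]; first exact: lex1.
- exact: le_trans bc.
- by rewrite lexI ab ac.
Qed.

Lemma ba_ideal_down b : ba_ideal [set c | c <= b].
Proof.
split=> [|a c /= cb ac|a c /= ab cb]; first exact: le0x.
- exact: le_trans cb.
- by rewrite leUx ab cb.
Qed.

Definition filter_adjoin F b : set A := [set c | exists2 f, F f & f `&` b <= c].

Lemma ba_filter_adjoin F b : ba_filter F -> ba_filter (filter_adjoin F b).
Proof.
move=> fF; split.
- by exists \top; [exact: ba_filter_top|exact: lex1].
- by move=> u v [f Ff fu] uv; exists f => //; exact: le_trans uv.
- move=> u v [f Ff fu] [g Fg gv]; exists (f `&` g); first exact: ba_filterI.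
  by rewrite lexI (le_trans _ fu) ?(le_trans _ gv) // leI2 ?leIl ?leIr.
Qed.

Lemma filter_adjoin_sub F b : F `<=` filter_adjoin F b.
Proof. by move=> f Ff; exists f => //; exact: leIl. Qed.

Lemma filter_adjoin_mem F b : ba_filter F -> filter_adjoin F b b.
Proof. by move=> fF; exists \top; [exact: ba_filter_top|rewrite meet1x]. Qed.

Lemma ultra_filter F : ba_ultrafilter F -> ba_filter F.
Proof. by case. Qed.

Lemma ultra_proper F : ba_ultrafilter F -> ~ F \bot.
Proof. by case. Qed.

Lemma ultra_max F G :
  ba_ultrafilter F -> ba_filter G -> ~ G \bot -> F `<=` G -> G = F.
Proof. by case=> _ _ h; exact: h. Qed.

Lemma ultraC F a : ba_ultrafilter F -> F (~` a) <-> ~ F a.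
Proof.
move=> uF; have fF := ultra_filter uF; split.
  move=> Fna Fa; apply: (ultra_proper uF).
  by rewrite -(meetxC a); exact: ba_filterI.
move=> nFa; have [[f Ff]|Gproper] := pselect (filter_adjoin F a \bot).
  by rewrite lex0 disj_leC => /(ba_filterS fF Ff).
have := ultra_max uF (ba_filter_adjoin a fF) Gproper (@filter_adjoin_sub F a).
by move=> GF; have := filter_adjoin_mem a fF; rewrite GF.
Qed.

Lemma ultraU F a b : ba_ultrafilter F -> F (a `|` b) -> F a \/ F b.
Proof.
move=> uF Fab; apply: contrapT => /not_orP[/(ultraC a uF) Fna /(ultraC b uF) Fnb].
move: Fab; apply/(ultraC _ uF); rewrite complU.
exact: ba_filterI (ultra_filter uF) _ _.
Qed.

Lemma ultraP F : ba_filter F -> ~ F \bot -> (forall a, F a \/ F (~` a)) ->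
  ba_ultrafilter F.
Proof.
move=> fF nF0 Fdec; split => // G fG nG0 FG.
apply/seteqP; split => // a Ga; have [//|/FG Gna] := Fdec a.
by exfalso; apply: nG0; rewrite -(meetxC a); exact: ba_filterI.
Qed.

Lemma ultra_sub_eq F G :
  ba_ultrafilter F -> ba_ultrafilter G -> F `<=` G -> F = G.
Proof. by move=> uF [fG nG0 _] FG; rewrite (ultra_max uF fG nG0 FG). Qed.

Lemma maximal_filter_avoiding F J : ba_filter F -> (forall a, F a -> ~ J a) ->
  exists M, [/\ ba_filter M, F `<=` M, (forall a, M a -> ~ J a) &
    forall G, ba_filter G -> M `<=` G -> (forall a, G a -> ~ J a) -> G = M].
Proof.
move=> fF FJ.
pose good G := [/\ ba_filter G, F `<=` G & forall a, G a -> ~ J a].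
have [M [[M0|[fM FM MJ]] Mmax]] :
    exists M, (M = set0 \/ good M) /\ forall G, M `<` G -> ~ (G = set0 \/ good G).
- apply: Zorn_bigcup => C Cgood Ctot.
  have [[G0 [CG0 [a0 G0a0]]]|Cempty] := pselect (exists G, C G /\ G !=set0);
    last first.
    left; apply/seteqP; split => // a [G CG Ga]; apply: Cempty.
    by exists G; split => //; exists a.
  have goodC G : C G -> G !=set0 -> good G.
    by move=> CG [a Ga]; case: (Cgood G CG) => // Gempty; rewrite Gempty in Ga.
  have [fG0 FG0 _] := goodC G0 CG0 (ex_intro _ a0 G0a0).
  right; split; [split| |].
  + by exists G0 => //; exact: ba_filter_top.
  + move=> a b [G CG Ga] ab; exists G => //.
    by have [fG _ _] := goodC G CG (ex_intro _ a Ga); exact: ba_filterS ab.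
  + move=> a b [G CG Ga] [H CH Hb].
    have [fG _ _] := goodC G CG (ex_intro _ a Ga).
    have [fH _ _] := goodC H CH (ex_intro _ b Hb).
    have [GH|HG] := Ctot G H CG CH.
    * by exists H => //; apply: ba_filterI => //; exact: GH.
    * by exists G => //; apply: ba_filterI => //; exact: HG.
  + by move=> a /FG0 G0a; exists G0.
  + by move=> a [G CG Ga]; have [_ _] := goodC G CG (ex_intro _ a Ga); apply.
- exfalso; apply: (Mmax F); last by right; split.
  by rewrite M0; split=> [x []|/(_ \top (ba_filter_top fF))].
exists M; split => // G fG MG GJ; apply/seteqP; split => //.
apply: contrapT => GM; apply: (Mmax G); first by split.
by right; split => //; exact: subset_trans MG.
Qed.

Lemma maximal_filter_avoiding_ultra M J : ba_ideal J -> ba_filter M ->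
  (forall a, M a -> ~ J a) ->
  (forall G, ba_filter G -> M `<=` G -> (forall a, G a -> ~ J a) -> G = M) ->
  ba_ultrafilter M.
Proof.
move=> [J0 JS JU] fM MJ Mmax; apply: ultraP => // [/MJ //|a].
have meetJ b : ~ M b -> exists2 j, J j & filter_adjoin M b j.
  move=> nMb; apply: contrapT => nmeet; apply: nMb.
  rewrite -(Mmax (filter_adjoin M b)); first exact: filter_adjoin_mem.
  - exact: ba_filter_adjoin.
  - exact: filter_adjoin_sub.
  - by move=> c Mbc Jc; apply: nmeet; exists c.
apply: contrapT => /not_orP[/meetJ[j1 Jj1 [f1 Mf1 le1]]
  /meetJ[j2 Jj2 [f2 Mf2 le2]]].
apply: (MJ (f1 `&` f2)); first exact: ba_filterI.
apply: (JS _ (j1 `|` j2)); first exact: JU.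
rewrite -[f1 `&` f2]meetx1 -(joinxC a) meetUr leU2 //.
  by apply: le_trans le1; rewrite leI2 ?leIl.
by apply: le_trans le2; rewrite leI2 ?leIr.
Qed.

Lemma ultrafilter_separation F J : ba_filter F -> ba_ideal J ->
  (forall a, F a -> ~ J a) ->
  exists U, [/\ ba_ultrafilter U, F `<=` U & forall a, U a -> ~ J a].
Proof.
move=> fF iJ FJ; have [M [fM FM MJ Mmax]] := maximal_filter_avoiding fF FJ.
by exists M; split => //; exact: (maximal_filter_avoiding_ultra iJ).
Qed.

End BooleanFilters.

Section UltPoints.
Context {d : Order.disp_t} {A : ctbDistrLatticeType d}.
Implicit Types (x y : Ult A) (a b : A) (F J : set A).

Lemma uf_ultra x : ba_ultrafilter (uf x).
Proof. exact: set_valP x. Qed.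

Lemma uf_filter x : ba_filter (uf x).
Proof. exact: ultra_filter (uf_ultra x). Qed.

Lemma uf_top x : uf x \top.
Proof. exact: ba_filter_top (uf_filter x). Qed.

Lemma uf_bot x : ~ uf x \bot.
Proof. exact: ultra_proper (uf_ultra x). Qed.

Lemma ufS x a b : uf x a -> a <= b -> uf x b.
Proof. exact: ba_filterS (uf_filter x). Qed.

Lemma ufI x a b : uf x (a `&` b) <-> uf x a /\ uf x b.
Proof.
split=> [xab|[xa xb]]; last exact: ba_filterI (uf_filter x) xa xb.
by split; apply: ufS xab _; rewrite ?leIl ?leIr.
Qed.

Lemma ufU x a b : uf x (a `|` b) <-> uf x a \/ uf x b.
Proof.
split=> [/(ultraU (uf_ultra x))//|[xa|xb]].
- by apply: ufS xa _; rewrite leUl.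
- by apply: ufS xb _; rewrite leUr.
Qed.

Lemma ufC x a : uf x (~` a) <-> ~ uf x a.
Proof. exact: ultraC a (uf_ultra x). Qed.

Lemma uf_inj : injective (@uf d A).
Proof.
move=> x y xy; apply/val_inj/funext => a; apply/idP/idP => h.
- by have : uf x a := h; rewrite xy.
- by have : uf y a := h; rewrite -xy.
Qed.

Lemma uf_sub_eq x y : uf x `<=` uf y -> x = y.
Proof. by move=> xy; apply/uf_inj/ultra_sub_eq => //; exact: uf_ultra. Qed.

Lemma uf_neq x y : x <> y -> exists a, uf x a /\ ~ uf y a.
Proof.
move=> nxy; apply: contrapT => nsep; apply/nxy/uf_sub_eq => a xa.
by apply: contrapT => nya; apply: nsep; exists a.
Qed.

Definition ult_of F (uF : ba_ultrafilter F) : Ult A :=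
  exist _ (fun a => `[< F a >]) (mem_set (eq_ind_r (@ba_ultrafilter d A) uF
    (funext (fun a => asboolE (F a))))).

Lemma uf_ult_of F (uF : ba_ultrafilter F) : uf (ult_of uF) = F.
Proof. exact: funext (fun a => asboolE (F a)). Qed.

Lemma ult_separation F J : ba_filter F -> ba_ideal J ->
  (forall a, F a -> ~ J a) ->
  exists x : Ult A, F `<=` uf x /\ forall a, uf x a -> ~ J a.
Proof.
move=> fF iJ FJ; have [U [uU FU UJ]] := ultrafilter_separation fF iJ FJ.
by exists (ult_of uU); rewrite uf_ult_of.
Qed.

End UltPoints.

Section Subordinations.
Context {d1 d2 : Order.disp_t} {A : ctbDistrLatticeType d1}
  {B : ctbDistrLatticeType d2}.
Implicit Types (S T : A -> B -> Prop) (a : A) (b : B).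

Lemma subord0 S : subordination S -> S \bot \bot.
Proof. by case=> -[]. Qed.

Lemma subord1 S : subordination S -> S \top \top.
Proof. by case=> -[]. Qed.

Lemma subordU S a a' b : subordination S -> S a b -> S a' b -> S (a `|` a') b.
Proof. by case=> _ h _ _; exact: h. Qed.

Lemma subordI S a b b' : subordination S -> S a b -> S a b' -> S a (b `&` b').
Proof. by case=> _ _ h _; exact: h. Qed.

Lemma subord_le S a a' b b' :
  subordination S -> a <= a' -> S a' b -> b <= b' -> S a b'.
Proof. by case=> _ _ _ h; exact: h. Qed.

Lemma ba_filter_image S F : subordination S -> ba_filter F ->
  ba_filter (sub_image S F).
Proof.
move=> sS fF; split.
- by exists \top; [exact: ba_filter_top|exact: subord1].
- by move=> b b' [a Fa Sab] bb'; exists a => //; exact: subord_le Sab bb'.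
- move=> b b' [a Fa Sab] [a' Fa' Sab']; exists (a `&` a').
    exact: ba_filterI.
  by apply: subordI => //; [apply: subord_le Sab _|apply: subord_le Sab' _];
    rewrite ?leIl ?leIr.
Qed.

Lemma subord_sep S a b : subordination S -> ~ S a b ->
  exists x y, [/\ uf x a, ~ uf y b & R_of S (x, y)].
Proof.
move=> sS nSab.
have iSb : ba_ideal [set c | S c b].
  split=> /= [|c c' Sc'b cc'|c c' Scb Sc'b].
  - exact: subord_le sS (lexx _) (subord0 sS) (le0x _).
  - exact: subord_le Sc'b _.
  - exact: subordU.
have [x [xa xnSb]] : exists x, uf x a /\ forall c, uf x c -> ~ S c b.
  have [|x [ax xnSb]] := ult_separation (ba_filter_up a) iSb.
    by move=> c /= ac Scb; apply: nSab; exact: subord_le Scb _.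
  by exists x; split => //; exact: ax (lexx a).
have [|y [Sxy ynb]] := ult_separation (ba_filter_image sS (uf_filter x))
  (ba_ideal_down b).
  move=> c [a' xa' Sa'c] /= cb; apply: (xnSb a') => //.
  exact: subord_le Sa'c cb.
by exists x, y; split=> // /ynb; apply; exact: lexx.
Qed.

Lemma subordP S a b : subordination S ->
  S a b <-> (forall x y, R_of S (x, y) -> uf x a -> uf y b).
Proof.
move=> sS; split=> [Sab x y Rxy xa|sep]; first by apply: Rxy; exists a.
apply: contrapT => /(subord_sep sS) [x [y [xa nyb Rxy]]].
exact/nyb/(sep x y Rxy xa).
Qed.

Lemma R_of_le S1 S2 : subordination S1 -> subordination S2 ->
  ((forall a b, S1 a b -> S2 a b) <-> R_of S2 `<=` R_of S1).
Proof.
move=> s1 s2; split=> [S12 [x y] /= R2 b [a xa S1ab]|R21 a b S1ab].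
  by apply: R2; exists a => //; exact: S12.
by apply/(subordP _ _ s2) => x y /R21 R1 xa; apply: R1; exists a.
Qed.

Lemma R_of_dagger S : subordination S ->
  R_of (sub_dagger S) = rel_conv (R_of S).
Proof.
move=> sS; apply/seteqP; split => -[y x] /= Rd.
- move=> b [a xa Sab]; apply: contrapT => /ufC ynb.
  by apply/ufC: xa; apply: Rd; exists (~` b); rewrite /sub_dagger ?complK.
- move=> a [b yb Sba]; apply: contrapT => /ufC xna.
  by apply/ufC: yb; apply: Rd; exists (~` a).
Qed.

Lemma subord_points x y : subordination (fun a b => uf x a -> uf y b).
Proof.
split.
- by split=> [/uf_bot|_] //; exact: uf_top.
- by move=> a a' b xay xa'y /ufU[/xay|/xa'y].
- by move=> a b b' xay xay' xa; apply/ufI; split; [exact: xay|exact: xay'].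
- by move=> a a' b b' aa' xay bb' xa; apply: ufS bb'; apply: xay; exact: ufS aa'.
Qed.

Lemma R_of_meet S1 S2 M : subordination S1 -> subordination S2 ->
  sub_is_meet S1 S2 M -> R_of M = (R_of S1 `&` R_of S2)%classic.
Proof.
move=> s1 s2 [sM M1 M2 Mglb]; apply/seteqP; split => -[x y] /=.
- by move=> RM; split => b [a xa Sab]; apply: RM; exists a => //;
    [exact: M1|exact: M2].
- move=> [R1 R2] b [a xa Mab].
  have lbM : forall a b, M a b -> uf x a -> uf y b.
    apply: Mglb => [|a' b' S1ab xa'|a' b' S2ab xa']; first exact: subord_points.
    + by apply: R1; exists a'.
    + by apply: R2; exists a'.
  exact: lbM Mab xa.
Qed.

End Subordinations.

Lemma R_of_comp {d1 d2 d3 : Order.disp_t} {A : ctbDistrLatticeType d1}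
    {B : ctbDistrLatticeType d2} {C : ctbDistrLatticeType d3}
    (S : A -> B -> Prop) (T : B -> C -> Prop) :
  subordination S -> subordination T ->
  R_of (sub_comp S T) = rel_comp (R_of S) (R_of T).
Proof.
move=> sS sT; apply/seteqP; split => -[x y] /=; last first.
  move=> [z [Rxz Rzy]] c [a xa [b [Sab Tbc]]].
  by apply: Rzy; exists b => //; apply: Rxz; exists a.
move=> Rxy.
have iTy : ba_ideal [set b | exists2 c, T b c & ~ uf y c].
  split=> /= [|b b' [c Tb'c nyc] bb'|b b' [c Tbc nyc] [c' Tb'c' nyc']].
  - by exists \bot; [exact: subord0|exact: uf_bot].
  - by exists c => //; exact: subord_le Tb'c _.
  - exists (c `|` c'); last by move/ufU => [].
    by apply: subordU => //; [apply: subord_le Tbc _|apply: subord_le Tb'c' _];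
      rewrite ?leUl ?leUr.
have [|z [Sxz zTy]] := ult_separation (ba_filter_image sS (uf_filter x)) iTy.
  by move=> b [a xa Sab] [c Tbc]; apply; apply: Rxy; exists a => //; exists b.
exists z; split => // c [b zb Tbc]; apply: contrapT => nyc.
by apply: (zTy b zb); exists c.
Qed.

Lemma R_of_id {d : Order.disp_t} (A : ctbDistrLatticeType d) :
  R_of (sub_id A) = rel_id (Ult A).
Proof.
apply/seteqP; split => -[x y] /=.
- rewrite /rel_id /= => Rxy; apply: uf_sub_eq => a xa.
  by apply: Rxy; exists a => //; exact: lexx.
- by rewrite /rel_id /= => <- b [a xa ab]; exact: ufS ab.
Qed.

Lemma subord_id {d : Order.disp_t} (A : ctbDistrLatticeType d) :
  subordination (sub_id A).
Proof.
rewrite /sub_id; split=> //.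
- by move=> a b c ac bc; rewrite leUx ac bc.
- by move=> a c e ac ae; rewrite lexI ac ae.
- by move=> a b c e ab bc ce; apply: le_trans ce; exact: le_trans bc.
Qed.

Section SubordinationCategory.
Context {d1 d2 d3 d4 : Order.disp_t} {A : ctbDistrLatticeType d1}
  {B : ctbDistrLatticeType d2} {C : ctbDistrLatticeType d3}
  {D : ctbDistrLatticeType d4}.

Lemma subord_comp (S : A -> B -> Prop) (T : B -> C -> Prop) :
  subordination S -> subordination T -> subordination (sub_comp S T).
Proof.
move=> sS sT; split.
- split; [exists \bot; split; exact: subord0|exists \top; split; exact: subord1].
- move=> a a' c [b [Sab Tbc]] [b' [Sa'b' Tb'c]]; exists (b `|` b'); split.
    by apply: subordU => //; [apply: subord_le Sab _|apply: subord_le Sa'b' _];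
      rewrite ?leUl ?leUr.
  exact: subordU.
- move=> a c c' [b [Sab Tbc]] [b' [Sab' Tb'c']]; exists (b `&` b'); split.
    exact: subordI.
  by apply: subordI => //; [apply: subord_le Tbc _|apply: subord_le Tb'c' _];
    rewrite ?leIl ?leIr.
- move=> a a' c c' aa' [b [Sa'b Tbc]] cc'; exists b; split.
  + exact: subord_le Sa'b _.
  + exact: subord_le Tbc cc'.
Qed.

Lemma sub_comp_idl (S : A -> B -> Prop) : subordination S ->
  sub_comp (sub_id A) S = S.
Proof.
move=> sS; apply: rel_ext => a b; split=> [[a' [aa' Sa'b]]|Sab].
- exact: subord_le aa' Sa'b (lexx _).
- by exists a; split => //; exact: lexx.
Qed.

Lemma sub_comp_idr (S : A -> B -> Prop) : subordination S ->
  sub_comp S (sub_id B) = S.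
Proof.
move=> sS; apply: rel_ext => a b; split=> [[b' [Sab' b'b]]|Sab].
- exact: subord_le (lexx _) Sab' b'b.
- by exists b; split => //; exact: lexx.
Qed.

Lemma sub_compA (S : A -> B -> Prop) (T : B -> C -> Prop) (U : C -> D -> Prop) :
  sub_comp (sub_comp S T) U = sub_comp S (sub_comp T U).
Proof.
apply: rel_ext => a e; split.
- by move=> [c [[b [Sab Tbc]] Uce]]; exists b; split => //; exists c.
- by move=> [b [Sab [c [Tbc Uce]]]]; exists c; split => //; exists b.
Qed.

Lemma sub_le_comp (S S' : A -> B -> Prop) (T T' : B -> C -> Prop) :
  sub_le S S' -> sub_le T T' -> sub_le (sub_comp S T) (sub_comp S' T').
Proof. by move=> SS' TT' a c [b [Sab Tbc]]; exists b; split; auto. Qed.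

Lemma sub_dagger_comp (S : A -> B -> Prop) (T : B -> C -> Prop) :
  sub_dagger (sub_comp S T) = sub_comp (sub_dagger T) (sub_dagger S).
Proof.
apply: rel_ext => c a; split.
- by move=> [b [Sab Tbc]]; exists (~` b); rewrite /sub_dagger complK.
- by move=> [b [Tbc Sab]]; exists (~` b).
Qed.

End SubordinationCategory.

Section Dagger.
Context {d1 d2 : Order.disp_t} {A : ctbDistrLatticeType d1}
  {B : ctbDistrLatticeType d2}.
Implicit Types (S : A -> B -> Prop).

Lemma subord_dagger S : subordination S -> subordination (sub_dagger S).
Proof.
move=> sS; rewrite /sub_dagger; split.
- by rewrite !compl0 !compl1; split; [exact: subord1 sS|exact: subord0 sS].
- by move=> b b' a Sb Sb'; rewrite complU; exact: subordI.
- by move=> b a a' Sa Sa'; rewrite complI; exact: subordU.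
- by move=> b b' a a' bb' Sb aa'; apply: subord_le sS _ Sb _; rewrite leC.
Qed.

Lemma sub_daggerK S : sub_dagger (sub_dagger S) = S.
Proof. by apply: rel_ext => a b; rewrite /sub_dagger !complK. Qed.

Lemma sub_dagger_le S S' : sub_le S S' -> sub_le (sub_dagger S) (sub_dagger S').
Proof. by move=> SS' b a; exact: SS'. Qed.

(* Hom-sets are ordered by reverse inclusion: the meet of [S1] and [S2] is
   the least subordination containing both. *)
Definition sub_meet (S1 S2 : A -> B -> Prop) (a : A) (b : B) : Prop :=
  forall N, subordination N -> (forall a b, S1 a b -> N a b) ->
    (forall a b, S2 a b -> N a b) -> N a b.

Lemma sub_meetP S1 S2 : sub_is_meet S1 S2 (sub_meet S1 S2).
Proof.
split=> [|a b S1ab N _ S1N _|a b S2ab N _ _ S2N|N sN N1 N2 a b]; last 3 first.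
- exact: S1N.
- exact: S2N.
- exact.
split=> [|a a' b Mab Ma'b N sN S1N S2N|a b b' Mab Mab' N sN S1N S2N|
          a a' b b' aa' Ma'b bb' N sN S1N S2N].
- by split=> N sN _ _; [exact: subord0|exact: subord1].
- by apply: subordU => //; [exact: Mab|exact: Ma'b].
- by apply: subordI => //; [exact: Mab|exact: Mab'].
- by apply: subord_le aa' _ bb' => //; exact: Ma'b.
Qed.

End Dagger.

Lemma sub_dagger_id {d : Order.disp_t} (A : ctbDistrLatticeType d) :
  sub_dagger (sub_id A) = sub_id A.
Proof. by apply: rel_ext => a b; rewrite /sub_dagger /sub_id leC. Qed.

(* Modular law, checked on points: by [subordP] it suffices to compare the
   relations, where it is the modular law of relations. *)
Lemma sub_modular {d1 d2 d3 : Order.disp_t} {C : ctbDistrLatticeType d1}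
    {D : ctbDistrLatticeType d2} {E : ctbDistrLatticeType d3}
    (f : C -> D -> Prop) (g : D -> E -> Prop) (h : C -> E -> Prop)
    (M1 : C -> E -> Prop) (M2 : D -> E -> Prop) :
  subordination f -> subordination g -> subordination h ->
  sub_is_meet (sub_comp f g) h M1 ->
  sub_is_meet g (sub_comp (sub_dagger f) h) M2 ->
  sub_le M1 (sub_comp f M2).
Proof.
move=> sf sg sh m1 m2 c e [dd [fcd M2de]].
have [sM1 _ _ _] := m1; have [sM2 _ _ _] := m2.
have sfh := subord_comp (subord_dagger sf) sh.
apply/(subordP _ _ sM1) => x y.
rewrite (R_of_meet (subord_comp sf sg) sh m1) (R_of_comp sf sg).
move=> [[z [Rxz Rzy]] Rxy] xc.
have zd : uf z dd by apply: Rxz; exists c.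
apply: (proj1 (subordP dd e sM2) M2de z y) => //.
rewrite (R_of_meet sg sfh m2) (R_of_comp (subord_dagger sf) sh) (R_of_dagger sf).
by split => //; exists x.
Qed.

Lemma BAS_allegory : BAS_is_allegory.
Proof.
split; first by move=> d A; exact: subord_id.
split; first by move=> *; exact: subord_comp.
split; first by move=> d1 d2 A B S sS; rewrite sub_comp_idl ?sub_comp_idr.
split; first by move=> *; exact: sub_compA.
split.
  move=> d1 d2 A B S S' S'' _ _ _.
  split=> // [SS' S'S'' a b /S'S''/SS' //|SS' S'S].
  by apply: rel_ext => a b; split; [exact: S'S|exact: SS'].
split; first by move=> *; exact: sub_le_comp.
split; first by move=> *; exact: subord_dagger.
split; first by move=> d A; exact: sub_dagger_id.
split; first by move=> *; exact: sub_dagger_comp.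
split; first by move=> *; exact: sub_daggerK.
split; first by move=> *; exact: sub_dagger_le.
split.
  by move=> d1 d2 A B S1 S2 _ _; exists (sub_meet S1 S2); exact: sub_meetP.
by move=> d1 d2 d3 C D E f g h M1 M2 sf sg sh; exact: sub_modular.
Qed.

Lemma fst_continuous (T U : topologicalType) : continuous (@fst T U).
Proof.
move=> [x y] A xA; rewrite /nbhs /=.
exists (A, setT) => /=; last by move=> [? ?] [].
by split=> //; exact: filterT.
Qed.

Lemma snd_continuous (T U : topologicalType) : continuous (@snd T U).
Proof.
move=> [x y] A yA; rewrite /nbhs /=.
exists (setT, A) => /=; last by move=> [? ?] [].
by split=> //; exact: filterT.
Qed.

Lemma closed_setX (T U : topologicalType) (P : set T) (Q : set U) :
  closed P -> closed Q -> closed (P `*` Q).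
Proof.
move=> cP cQ; have -> : P `*` Q = (fst @^-1` P `&` snd @^-1` Q)%classic by [].
apply: closedI; apply: preimage_closed => // z _.
- exact: fst_continuous.
- exact: snd_continuous.
Qed.

Lemma open_setX (T U : topologicalType) (P : set T) (Q : set U) :
  open P -> open Q -> open (P `*` Q).
Proof.
move=> oP oQ; rewrite openE => -[x y] [/= Px Qy].
by exists (P, Q) => //=; split; exact: open_nbhs_nbhs.
Qed.

Lemma closed_rel_conv (X Y : topologicalType) (R : set (X * Y)) :
  closed R -> closed (rel_conv R).
Proof.
move=> cR; apply: (@preimage_closed _ _ (fun p : Y * X => (p.2, p.1))) => // p _.
exact: swap_continuous.
Qed.

Lemma compact_directed_empty (T : topologicalType) (I : Type) (D : set I)
    (f : I -> set T) :
  compact [set: T] -> (forall i, D i -> closed (f i)) -> (exists i, D i) ->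
  (forall i j, D i -> D j -> exists2 k, D k & (f k `<=` f i `&` f j)%classic) ->
  (forall p, exists2 i, D i & ~ f i p) -> exists2 i, D i & f i = set0.
Proof.
move=> cT cf [i0 Di0] dir noint; apply: contrapT => nempty.
have ne i : D i -> f i !=set0.
  by move=> Di; apply/set0P/negP => /eqP fi0; apply: nempty; exists i.
have [|p [_ clp]] := cT (filter_from D f) (filter_from_proper (filter_from_filter
  (ex_intro _ i0 Di0) dir) ne).
  by exists i0.
have [i Di nfi] := noint p; apply/nfi/(cf i Di) => B nB.
have [q [fq Bq]] := clp (f i) B (ex_intro2 _ _ i Di (@subset_refl _ _)) nB.
by exists q.
Qed.

Lemma compact_set_type (T : topologicalType) (K : set T) :
  compact K -> compact [set: set_type K].
Proof.
move=> cK F PF _.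
have [p [Kp clp]] := cK (set_val @ F) (fmap_proper_filter _ PF)
  (filterS (fun x _ => set_valP x) filterT).
exists (SigSub (mem_set Kp)); split => // U B FU.
rewrite nbhsE => -[O [[G oG GO] Op] OB].
have FU' : (set_val @ F) (set_val @` U).
  by move: FU; apply: (@filterS _ F PF U) => x Ux /=; exists x.
have Gp : G p by move: Op; rewrite -GO.
have [q [[u Uu <-] Gu]] := clp _ _ FU' (open_nbhs_nbhs (conj oG Gp)).
by exists u; split => //; apply: OB; rewrite -GO.
Qed.

Section UltTopology.
Context {d : Order.disp_t} {A : ctbDistrLatticeType d}.
Local Notation bool_fun := {ptws A -> bool}.
Implicit Types (a b : A) (x y : Ult A).

Lemma open_coord a (u : bool) : open [set f : bool_fun | u = f a].
Proof.
have -> : [set f : bool_fun | u = f a] = (fun f : bool_fun => f a) @^-1` [set u].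
  by apply/seteqP; split => f /= ->.
by apply: open_comp; [move=> f _; exact: proj_continuous|exact: discrete_open].
Qed.

Lemma closed_coord a (u : bool) : closed [set f : bool_fun | u = f a].
Proof.
have -> : [set f : bool_fun | u = f a] = (~` [set f | ~~ u = f a])%classic.
  by apply/seteqP; split => f /=; case: (f a); case: u.
by rewrite closedC; exact: open_coord.
Qed.

Lemma closed_coord_case a (E : bool -> set bool_fun) :
  (forall u, closed (E u)) -> closed [set f : bool_fun | E (f a) f].
Proof.
move=> cE; have -> : [set f : bool_fun | E (f a) f] =
    (([set f | true = f a] `&` E true) `|`
     ([set f | false = f a] `&` E false))%classic.
  apply/seteqP; split => f /=; first by case: (f a); [left|right].
  by move=> [[<-]|[<-]].
by apply: closedU; apply: closedI => //; exact: closed_coord.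
Qed.

Lemma ult_pointsP (f : bool_fun) : ult_points f <->
  [/\ f \top, (forall a b, f a && f b = f (a `&` b)) &
      (forall a, ~~ f a = f (~` a))].
Proof.
split=> [uf_|[f1 fI fC]].
- have fF := ultra_filter uf_; split; first exact: ba_filter_top fF.
  + move=> a b; apply/andP/idP => [[fa fb]|fab]; first exact: ba_filterI fF fa fb.
    by split; apply: ba_filterS fF fab _; rewrite ?leIl ?leIr.
  + by move=> a; apply/negP/idP => /(ultraC a uf_).
- have f0 : ~ f \bot by rewrite -compl1 -fC f1.
  apply: ultraP => [|//|a]; last by rewrite /= -fC; case: (f a); [left|right].
  split=> // [a b fa /meet_idPl ab|a b fa fb] /=; last by rewrite -fI fa fb.
  by move: (fI a b); rewrite ab fa.
Qed.

Lemma closed_ult_points : closed (@ult_points d A).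
Proof.
have -> : @ult_points d A = ([set f | true = f \top] `&`
    \bigcap_(ab in [set: A * A])
      [set f | f ab.1 && f ab.2 = f (ab.1 `&` ab.2)%O] `&`
    \bigcap_(a in [set: A]) [set f | ~~ f a = f (~` a)%O])%classic.
  apply/seteqP; split => f.
  - by move=> /ult_pointsP[f1 fI fC]; split; [split|] => // [[a b] _|a _] /=.
  - move=> [[f1 fI] fC]; apply/ult_pointsP; split => // [a b|a].
    + exact: (fI (a, b)).
    + exact: fC.
apply: closedI; [apply: closedI|]; first exact: closed_coord.
- apply: closed_bigI => -[a b] _ /=.
  apply: (closed_coord_case (a := a) (E := fun u f => u && f b = f (a `&` b))).
  move=> u.
  apply: (closed_coord_case (a := b) (E := fun v f => u && v = f (a `&` b))).
  move=> v.
  exact: closed_coord.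
- apply: closed_bigI => a _.
  apply: (closed_coord_case (a := a) (E := fun u f => ~~ u = f (~` a))) => u.
  exact: closed_coord.
Qed.

Lemma Ult_compact : compact [set: Ult A].
Proof.
apply/compact_set_type/(subclosed_compact closed_ult_points _ (@subsetT _ _)).
have := @tychonoff _ (fun _ : A => bool) _ (fun=> bool_compact).
by congr (compact _); rewrite eqEsubset.
Qed.

Definition ult_set a : set (Ult A) := [set x | uf x a].

Lemma open_ult_set a : open (ult_set a).
Proof.
have -> : ult_set a = set_val @^-1` [set f : bool_fun | true = f a].
  by apply/seteqP; split => x /= /esym.
by apply: open_comp; [move=> x _; exact: initial_continuous|exact: open_coord].
Qed.

Lemma ult_setC a : ult_set (~` a) = (~` ult_set a)%classic.
Proof. by apply/seteqP; split => x /ufC. Qed.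

Lemma clopen_ult_set a : clopen (ult_set a).
Proof.
split; first exact: open_ult_set.
by rewrite -[a]complK ult_setC closedC; exact: open_ult_set.
Qed.

Lemma ult_setI a b : ult_set (a `&` b) = (ult_set a `&` ult_set b)%classic.
Proof. by apply/seteqP; split => x /ufI. Qed.

Lemma ult_setU a b : ult_set (a `|` b) = (ult_set a `|` ult_set b)%classic.
Proof. by apply/seteqP; split => x /ufU. Qed.

Lemma Ult_stone : stone_space (Ult A).
Proof.
split; first exact: Ult_compact.
- rewrite open_hausdorff => x y /eqP /uf_neq [a [xa nya]].
  exists (ult_set a, ult_set (~` a)).
    by rewrite !inE; split => //; exact/ufC.
  split; [exact: open_ult_set|exact: open_ult_set|].
  by rewrite ult_setC setICr.
- move=> x y /eqP /uf_neq [a [xa nya]].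
  by exists (ult_set a); split => //; exact: clopen_ult_set.
Qed.

Lemma ult_set_le a b : ult_set a `<=` ult_set b -> a <= b.
Proof.
move=> ab; apply: contrapT => nab.
have [|x [ax xb]] := ult_separation (ba_filter_up a) (ba_ideal_down b).
  by move=> c /= ac cb; apply: nab; exact: le_trans cb.
by apply: (xb b) (lexx b); apply: ab; exact: ax (lexx a).
Qed.

End UltTopology.

Section UltClopens.
Context {d : Order.disp_t} {A : ctbDistrLatticeType d}.
Implicit Types (a b : A) (x y : Ult A) (U : set (Ult A)).

(* The [ult_set a] with [uf x a] meet in [x] alone, so by compactness one of
   them lies inside the clopen neighbourhood [U]. *)
Lemma clopen_nbhs_ult_set U x : clopen U -> U x ->
  exists2 a, uf x a & (ult_set a `<=` U).
Proof.
move=> [oU cU] Ux.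
have [a xa Ua0] : exists2 a, uf x a & (~` U `&` ult_set a)%classic = set0.
  apply: (compact_directed_empty Ult_compact) => [a _||a b xa xb|p].
  - by apply: closedI; [exact: open_closedC|exact: (clopen_ult_set a).2].
  - by exists \top; exact: uf_top.
  - by exists (a `&` b); [exact/ufI|rewrite ult_setI => p [nUp [pa pb]]].
  - have [Up|nUp] := pselect (U p); first by exists \top; [exact: uf_top|case].
    have [|a [xa npa]] := @uf_neq _ _ x p.
      by move=> xp; apply: nUp; rewrite -xp.
    by exists a => // -[].
exists a => // y ya; apply: contrapT => nUy.
have : (~` U `&` ult_set a)%classic y by [].
by rewrite Ua0.
Qed.

Lemma clopen_ult_set_eq U : clopen U -> exists a, U = ult_set a.
Proof.
move=> clU; have [oU cU] := clU.
have [a aU Ua0] : exists2 a, (ult_set a `<=` U) &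
    (U `&` ult_set (~` a)%O)%classic = set0.
  apply: (compact_directed_empty Ult_compact) => [a _||a b aU bU|p].
  - by apply: closedI => //; exact: (clopen_ult_set _).2.
  - by exists \bot => x /= /uf_bot.
  - exists (a `|` b); first by rewrite /= ult_setU => x [/aU|/bU].
    by rewrite complU ult_setI => p [Up [pa pb]].
  - have [Up|nUp] := pselect (U p); last by exists \bot => [x /= /uf_bot|[]].
    have [a pa aU] := clopen_nbhs_ult_set clU Up.
    by exists a => // -[_]; rewrite ult_setC.
exists a; apply/seteqP; split => // y Uy; apply: contrapT => nya.
have : (U `&` ult_set (~` a)%O)%classic y by rewrite ult_setC.
by rewrite Ua0.
Qed.

End UltClopens.

Lemma R_of_closed {d1 d2 : Order.disp_t} {A : ctbDistrLatticeType d1}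
    {B : ctbDistrLatticeType d2} (S : A -> B -> Prop) :
  subordination S -> closed (R_of S).
Proof.
move=> sS; rewrite -[R_of S]setCK closedC.
have -> : (~` R_of S = \bigcup_(ab in [set ab : A * B | S ab.1 ab.2])
    (ult_set ab.1 `*` ult_set (~` ab.2)%O))%classic.
  apply/seteqP; split => -[x y] /=.
  - move=> nR; apply: contrapT => nU; apply: nR => b [a xa Sab].
    by apply: contrapT => /ufC ynb; apply: nU; exists (a, b).
  - move=> [[a b] /= Sab [/= xa /ufC ynb]] Rxy.
    by apply: ynb; apply: Rxy; exists a.
by apply: bigcup_open => -[a b] _; apply: open_setX; exact: open_ult_set.
Qed.

Section ClopNeighbourhoods.
Variable X : topologicalType.
Implicit Types (U V : Clop X) (x y : X).

Lemma clop_leP U V : U <= V <-> (val U `<=` val V).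
Proof.
split=> [/meet_idPl <- x []//|UV].
by apply/meet_idPl/val_inj; exact/setIidl.
Qed.

Lemma clop_valC U : val (~` U) = (~` val U)%classic.
Proof. by []. Qed.

Lemma clopen_val U : clopen (val U).
Proof. exact: set_valP U. Qed.

Definition clop_of (C : set X) (clC : clopen C) : Clop X := SigSub (mem_set clC).

Lemma clop_nbhs_ultra x : @ba_ultrafilter _ (Clop X) [set U | val U x].
Proof.
apply: ultraP => [|//|U]; last by have [|] := pselect (val U x); [left|right].
by split=> // U V Ux /clop_leP; apply.
Qed.

Definition clop_nbhs x : Ult (Clop X) := ult_of (clop_nbhs_ultra x).

Lemma uf_clop_nbhs x U : uf (clop_nbhs x) U = val U x.
Proof. by rewrite /clop_nbhs uf_ult_of. Qed.

Definition clop_nbhs_graph : set (X * Ult (Clop X)) :=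
  [set p | p.2 = clop_nbhs p.1].

Lemma closed_clop_nbhs_graph : closed clop_nbhs_graph.
Proof.
rewrite -[clop_nbhs_graph]setCK closedC.
have -> : (~` clop_nbhs_graph =
    \bigcup_(U in [set: Clop X]) (val (~` U)%O `*` ult_set U))%classic.
  apply/seteqP; split => -[x p] /=.
  - move=> /uf_neq [U [pU nU]]; exists U => //.
    by split => //=; rewrite -uf_clop_nbhs.
  - move=> [U _ [/= nUx pU]]; rewrite /clop_nbhs_graph /= => pe.
    by move: pU; rewrite /ult_set /= pe uf_clop_nbhs.
apply: bigcup_open => U _; apply: open_setX; last exact: open_ult_set.
exact: (clopen_val (~` U)%O).1.
Qed.

Section Stone.
Hypothesis sX : stone_space X.

Lemma clop_sep x y : x <> y -> exists U, val U x /\ ~ val U y.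
Proof.
case: sX => _ _ zX /eqP /zX [C [clC Cx nCy]].
by exists (clop_of clC).
Qed.

Lemma clop_nbhs_inj : injective clop_nbhs.
Proof.
move=> x y xy; apply: contrapT => /clop_sep [U [Ux nUy]].
by apply: nUy; rewrite -uf_clop_nbhs -xy uf_clop_nbhs.
Qed.

(* Compactness: the clopens of an ultrafilter have a common point. *)
Lemma clop_nbhs_surj p : exists x, p = clop_nbhs x.
Proof.
case: sX => cX _ _.
have [x px] : exists x, forall U, uf p U -> val U x.
  apply: contrapT => /forallNP nopt.
  have [|||y|U pU U0] :=
    compact_directed_empty (D := uf p) (f := fun U => val U) cX.
  - by move=> U _; exact: (clopen_val U).2.
  - by exists \top; exact: uf_top.
  - by move=> U V pU pV; exists (U `&` V); [exact/ufI|].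
  - by have /existsNP [U /not_implyP [pU nUy]] := nopt y; exists U.
  apply: (@uf_bot _ _ p); suff <- : U = \bot by [].
  exact/val_inj.
by exists x; apply: uf_sub_eq => U /px; rewrite uf_clop_nbhs.
Qed.

End Stone.

End ClopNeighbourhoods.

Section StoneRelations.
Variables X Y : topologicalType.
Hypotheses (sX : stone_space X) (sY : stone_space Y).

(* Clopens separate points; compactness of [X * Y] then yields a clopen box
   around [(x, y)] that misses the closed set [R]. *)
Lemma clopen_box_sep (R : set (X * Y)) x y : closed R -> ~ R (x, y) ->
  exists (U : Clop X) (V : Clop Y), [/\ val U x, val V y &
    forall x' y', val U x' -> val V y' -> ~ R (x', y')].
Proof.
move=> cR nRxy.
have cXY : compact [set: X * Y].
  by rewrite -setXTT; apply: compact_setX; [case: sX|case: sY].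
have [[U V] [/= Ux Vy] UV0] : exists2 UV : Clop X * Clop Y,
    val UV.1 x /\ val UV.2 y & (R `&` (val UV.1 `*` val UV.2))%classic = set0.
  apply: (compact_directed_empty cXY) =>
      [[U V] _||[U V] [U' V'] [/= Ux Vy] [/= U'x V'y]|[x' y']].
  - by apply: closedI => //; apply: closed_setX; exact: (clopen_val _).2.
  - by exists (\top, \top).
  - exists (U `&` U', V `&` V') => //.
    by move=> [a b] /= [Rab [/= [? ?] [? ?]]]; split; split.
  - have [Rx'y'|nRx'y'] := pselect (R (x', y')); last first.
      by exists (\top, \top) => // -[].
    have [ex|/nesym/(clop_sep sX)[U [Ux nUx']]] := pselect (x' = x); last first.
      by exists (U, \top) => // -[_ [/=]].
    have [ey|/nesym/(clop_sep sY)[V [Vy nVy']]] := pselect (y' = y); last first.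
      by exists (\top, V) => // -[_ [_ /=]].
    by move: Rx'y'; rewrite ex ey.
exists U, V; split => // x' y' Ux' Vy' Rx'y'.
have : (R `&` (val U `*` val V))%classic (x', y') by [].
by rewrite UV0.
Qed.

Lemma R_of_S_of_clop_nbhs (R : set (X * Y)) x y : closed R ->
  R_of (S_of R) (clop_nbhs x, clop_nbhs y) <-> R (x, y).
Proof.
move=> cR; split => [RS|Rxy V [U Ux SUV]]; last first.
  by rewrite /= uf_clop_nbhs; apply: SUV; exists x; rewrite -?uf_clop_nbhs.
apply: contrapT => /(clopen_box_sep cR) [U [V [Ux Vy UV]]].
have : uf (clop_nbhs y) (~` V)%O.
  apply: RS; exists U; first by rewrite uf_clop_nbhs.
  move=> y' [x' Ux' Rx'y']; rewrite clop_valC => Vy'.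
  exact: UV x' y' Ux' Vy' Rx'y'.
by rewrite uf_clop_nbhs clop_valC => /(_ Vy).
Qed.

End StoneRelations.

Lemma subord_S_of (X Y : topologicalType) (R : set (X * Y)) :
  subordination (S_of R).
Proof.
rewrite /S_of; split.
- by split=> [y [x []]|].
- by move=> U U' V UV U'V y [x [Ux|U'x] Rxy]; [apply: UV|apply: U'V]; exists x.
- by move=> U V W UV UW y Uy; split; [exact: UV|exact: UW].
- move=> U U' V W /clop_leP UU' U'V /clop_leP VW y [x Ux Rxy].
  by apply/VW/U'V; exists x => //; exact: UU'.
Qed.

Section ClopFunctor.
Variables X Y Z : topologicalType.

Lemma S_of_conv (R : set (X * Y)) : S_of (rel_conv R) = sub_dagger (S_of R).
Proof.
apply: rel_ext => V U; rewrite /sub_dagger /S_of !clop_valC.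
split=> [VU y [x nUx Rxy] Vy|VU x [y Vy Rxy]].
- by apply: nUx; apply: VU; exists y.
- by apply: contrapT => nUx; apply: (VU y) => //; exists x.
Qed.

Lemma S_of_id : S_of (rel_id X) = sub_id (Clop X).
Proof.
apply: rel_ext => U V; split=> [UV|/clop_leP UV x [y Uy]].
- by apply/clop_leP => x Ux; apply: UV; exists x.
- by rewrite /rel_id /= => <-; exact: UV.
Qed.

Hypotheses (sX : stone_space X) (sY : stone_space Y) (sZ : stone_space Z).

Lemma S_of_le (R1 R2 : set (X * Y)) : closed R1 -> closed R2 ->
  R1 `<=` R2 <-> (forall U V, S_of R2 U V -> S_of R1 U V).
Proof.
move=> c1 c2; split=> [R12 U V S2UV y [x Ux R1xy]|S21 [x y] R1xy].
  by apply: S2UV; exists x => //; exact: R12.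
apply/(R_of_S_of_clop_nbhs sX sY _ _ c2) => V [U Ux S2UV].
rewrite uf_clop_nbhs; apply: (S21 U V S2UV); exists x => //.
by rewrite -uf_clop_nbhs.
Qed.

Lemma S_of_meet (R1 R2 : set (X * Y)) : closed R1 -> closed R2 ->
  sub_is_meet (S_of R1) (S_of R2) (S_of (R1 `&` R2)%classic).
Proof.
move=> c1 c2; have s1 := subord_S_of R1; have s2 := subord_S_of R2.
split; first exact: subord_S_of.
- by move=> U V UV y [x Ux [R1xy _]]; apply: UV; exists x.
- by move=> U V UV y [x Ux [_ R2xy]]; apply: UV; exists x.
move=> N sN /(R_of_le s1 sN) N1 /(R_of_le s2 sN) N2 U V SUV.
apply/(subordP _ _ sN) => p q Npq.
have [x ?] := clop_nbhs_surj sX p; have [y ?] := clop_nbhs_surj sY q; subst p q.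
rewrite !uf_clop_nbhs => Ux; apply: SUV; exists x => //; split.
- exact/(R_of_S_of_clop_nbhs sX sY _ _ c1)/N1.
- exact/(R_of_S_of_clop_nbhs sX sY _ _ c2)/N2.
Qed.

Lemma S_of_comp (R : set (X * Y)) (R' : set (Y * Z)) : closed R -> closed R' ->
  S_of (rel_comp R R') = sub_comp (S_of R) (S_of R').
Proof.
move=> cR cR'; have sR := subord_S_of R; have sR' := subord_S_of R'.
have sRR' := subord_comp sR sR'.
have RR'E := R_of_comp sR sR'.
apply: rel_ext => U W; split=> [SUW|RUW z [x Ux [y [Rxy R'yz]]]].
- apply/(subordP _ _ sRR') => p r; rewrite RR'E => -[q [Rpq Rqr]].
  have [x ?] := clop_nbhs_surj sX p; have [y ?] := clop_nbhs_surj sY q.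
  have [z ?] := clop_nbhs_surj sZ r; subst p q r.
  rewrite !uf_clop_nbhs => Ux; apply: SUW; exists x => //; exists y; split.
  + exact/(R_of_S_of_clop_nbhs sX sY _ _ cR).
  + exact/(R_of_S_of_clop_nbhs sY sZ _ _ cR').
- rewrite -uf_clop_nbhs; apply: (proj1 (subordP U W sRR') RUW (clop_nbhs x));
    last by rewrite uf_clop_nbhs.
  rewrite RR'E; exists (clop_nbhs y); split.
  + exact/(R_of_S_of_clop_nbhs sX sY _ _ cR).
  + exact/(R_of_S_of_clop_nbhs sY sZ _ _ cR').
Qed.

End ClopFunctor.

Lemma Clop_morphism : Clop_is_allegory_morphism.
Proof.
split; first by move=> X Y R _ _ _; exact: subord_S_of.
split; first by move=> X _; exact: S_of_id.
split; first by move=> *; exact: S_of_comp.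
split; first by move=> *; exact: S_of_meet.
by move=> *; exact: S_of_conv.
Qed.

Lemma Ult_morphism : Ult_is_allegory_morphism.
Proof.
split; first by move=> d A; exact: Ult_stone.
split; first by move=> *; exact: R_of_closed.
split; first by move=> d A; exact: R_of_id.
split; first by move=> *; exact: R_of_comp.
split; first by move=> *; exact: R_of_meet.
by move=> *; exact: R_of_dagger.
Qed.

Lemma clop_nbhs_iso (X : topologicalType) : stone_space X ->
  stone_iso (@clop_nbhs_graph X).
Proof.
move=> sX; split; first exact: closed_clop_nbhs_graph.
exists (rel_conv (@clop_nbhs_graph X)); split.
- exact: closed_rel_conv (@closed_clop_nbhs_graph X).
- apply/seteqP; split => -[x x'];
    rewrite /rel_comp /rel_conv /clop_nbhs_graph /rel_id /=.
  + by move=> [p [-> /(clop_nbhs_inj sX)]].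
  + by move=> <-; exists (clop_nbhs x).
- apply/seteqP; split => -[p p'];
    rewrite /rel_comp /rel_conv /clop_nbhs_graph /rel_id /=.
  + by move=> [x [-> ->]].
  + by move=> <-; have [x ->] := clop_nbhs_surj sX p; exists x.
Qed.

Lemma clop_nbhs_natural (X Y : topologicalType) (R : set (X * Y)) :
  stone_space X -> stone_space Y -> closed R ->
  rel_comp (@clop_nbhs_graph X) (R_of (S_of R)) = rel_comp R (@clop_nbhs_graph Y).
Proof.
move=> sX sY cR; apply/seteqP; split => -[x q];
  rewrite /rel_comp /clop_nbhs_graph /=.
- move=> [p [-> Rpq]]; have [y eq] := clop_nbhs_surj sY q; rewrite eq in Rpq.
  by exists y; split => //; exact/(R_of_S_of_clop_nbhs sX sY _ _ cR).
- move=> [y [Rxy ->]]; exists (clop_nbhs x); split => //.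
  exact/(R_of_S_of_clop_nbhs sX sY _ _ cR).
Qed.

Section ClopUlt.
Context {d : Order.disp_t} {A : ctbDistrLatticeType d}.
Implicit Types (U V : Clop (Ult A)) (a b : A).

Definition clop_ult_counit U a : Prop := val U `<=` ult_set a.
Definition clop_ult_counit_inv a U : Prop := ult_set a `<=` val U.

Definition ult_set_clop a : Clop (Ult A) := clop_of (clopen_ult_set a).

Lemma subord_clop_ult_counit : subordination clop_ult_counit.
Proof.
rewrite /clop_ult_counit; split.
- by split=> // x _; exact: uf_top.
- by move=> U U' a Ua U'a x [/Ua|/U'a].
- by move=> U a b Ua Ub; rewrite ult_setI => x Ux; split; [exact: Ua|exact: Ub].
- by move=> U U' a b /clop_leP UU' U'a ab x /UU' /U'a xa; exact: ufS ab.
Qed.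

Lemma subord_clop_ult_counit_inv : subordination clop_ult_counit_inv.
Proof.
rewrite /clop_ult_counit_inv; split.
- by split=> // x /uf_bot.
- by move=> a a' U aU a'U; rewrite ult_setU => x [/aU|/a'U].
- by move=> a U V aU aV x xa; split; [exact: aU|exact: aV].
- move=> a a' U V aa' a'U /clop_leP UV x xa.
  by apply/UV/a'U; exact: ufS aa'.
Qed.

Lemma clop_ult_counit_iso : sub_iso clop_ult_counit.
Proof.
split; first exact: subord_clop_ult_counit.
exists clop_ult_counit_inv; split; first exact: subord_clop_ult_counit_inv.
all: rewrite /sub_comp /clop_ult_counit /clop_ult_counit_inv.
- apply: rel_ext => U V; split=> [[a [Ua aV]]|/clop_leP UV].
  + by apply/clop_leP => x /Ua /aV.
  + have [a Ua] := clopen_ult_set_eq (clopen_val U).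
    by exists a; rewrite -Ua; split; [exact: subset_refl|].
- apply: rel_ext => a b; split=> [[U [aU Ub]]|ab].
  + by apply: ult_set_le => x /aU /Ub.
  + by exists (ult_set_clop a); split => // x xa; exact: ufS ab.
Qed.

End ClopUlt.

Lemma clop_ult_counit_natural {d1 d2 : Order.disp_t}
    (A : ctbDistrLatticeType d1) (B : ctbDistrLatticeType d2)
    (S : A -> B -> Prop) : subordination S ->
  sub_comp (@clop_ult_counit _ A) S =
  sub_comp (S_of (R_of S)) (@clop_ult_counit _ B).
Proof.
move=> sS; apply: rel_ext => U c; rewrite /sub_comp /clop_ult_counit.
split=> [[a [Ua Sac]]|[V [UV Vc]]].
- exists (ult_set_clop c); split => // y [x Ux Rxy].
  by apply: Rxy; exists a => //; exact: Ua.
- have [a Ua] := clopen_ult_set_eq (clopen_val U).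
  exists a; split; first by rewrite Ua.
  apply/(subordP _ _ sS) => x y Rxy xa; apply/Vc/UV.
  by exists x => //; rewrite Ua.
Qed.

Lemma Clop_Ult_equivalence : Clop_Ult_quasi_inverse.
Proof.
split.
- exists (@clop_nbhs_graph); split; first exact: clop_nbhs_iso.
  by move=> X Y R sX sY cR; exact: clop_nbhs_natural.
- exists (fun d A => @clop_ult_counit d A); split.
    by move=> d A; exact: clop_ult_counit_iso.
  by move=> d1 d2 A B S sS; exact: clop_ult_counit_natural.
Qed.

Theorem theorem2p12 :
  BAS_is_allegory /\
  Clop_is_allegory_morphism /\
  Ult_is_allegory_morphism /\
  Clop_Ult_quasi_inverse /\
  (forall (X Y : topologicalType) (R1 R2 : set (X * Y)),
     stone_space X -> stone_space Y -> closed R1 -> closed R2 ->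
     (R1 `<=` R2 <-> (forall U V, S_of R2 U V -> S_of R1 U V))) /\
  (forall d1 d2 (A : ctbDistrLatticeType d1) (B : ctbDistrLatticeType d2)
     (S1 S2 : A -> B -> Prop), subordination S1 -> subordination S2 ->
     ((forall a b, S1 a b -> S2 a b) <-> R_of S2 `<=` R_of S1)) /\
  (forall (X Y : topologicalType) (R : set (X * Y)),
     stone_space X -> stone_space Y -> closed R ->
     S_of (rel_conv R) = sub_dagger (S_of R)) /\
  (forall d1 d2 (A : ctbDistrLatticeType d1) (B : ctbDistrLatticeType d2)
     (S : A -> B -> Prop), subordination S ->
     R_of (sub_dagger S) = rel_conv (R_of S)).
Proof.
split; first exact: BAS_allegory.
split; first exact: Clop_morphism.
split; first exact: Ult_morphism.
split; first exact: Clop_Ult_equivalence.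
split; first by move=> X Y R1 R2 sX sY; exact: S_of_le.
split; first by move=> *; exact: R_of_le.
split; first by move=> *; exact: S_of_conv.
by move=> *; exact: R_of_dagger.
Qed.
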